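(* Let $0\le\sigma<1$, let $g(x)=\frac{\sin\log x}{\log x}$ for $0<x<1$, $g(0)=g(1)=0$, and $g_\sigma(x)=g(x)/x^\sigma$ for $0<x\le1$. There is a constant $C_\sigma$ depending only on $\sigma$ such that for all $\ell\ge1$, $$\Big|R_{g_\sigma}(\ell)-\int_0^1g_\sigma(t)\,dt\Big|\le\frac{C_\sigma}{\ell^{1-\sigma}},\qquad\text{where } R_{g_\sigma}(\ell)=\frac1\ell\sum_{k=1}^\ell g_\sigma\big(\tfrac k\ell\big).$$ Further, $\int_0^1g_\sigma(t)\,dt=\arctan\big(\frac{1}{1-\sigma}\big)$. *)

From Stdlib Require Import Reals Lra.
From Coquelicot Require Import Coquelicot.
Open Scope R_scope.

Definition g (x : R) : R :=
  if Rlt_dec 0 x then if Rlt_dec x 1 then sin (ln x) / ln x else 0 else 0.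

(* g_sigma(x) = g(x) / x^sigma for 0 < x <= 1; outside (0,1] we put 0
   (the value at 0 is irrelevant: not sampled by the Riemann sums, measure zero). *)
Definition g_sigma (sigma x : R) : R :=
  if Rlt_dec 0 x then if Rle_dec x 1 then g x / Rpower x sigma else 0 else 0.

Definition riemann_sum (sigma : R) (l : nat) : R :=
  / INR l * sum_n_m (fun k => g_sigma sigma (INR k / INR l)) 1 l.

Definition int_g_sigma (sigma : R) : R :=
  RInt_gen (g_sigma sigma) (at_right 0) (at_point 1).

(* Since sin (ln x) / ln x = \int_0^1 cos (s ln x) ds, g_sigma is the average over s in [0, 1]
   of phi_s x = x^-sigma cos (s ln x), which has the explicit antiderivative
   Phi_s x = x^(1-sigma) ((1-sigma) cos (s ln x) + s sin (s ln x)) / ((1-sigma)^2 + s^2),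
   vanishing at 0+ and with \int_0^1 Phi_s 1 ds = arctan (1 / (1 - sigma)).
   For the Riemann sums, phi_s'' = O(x^(-sigma-2)) uniformly in s, so the trapezoid rule on
   [k h, (k+1) h] errs by O(h^(1-sigma) / k^2), which sums to O(h^(1-sigma)); a mean value
   argument in s then transfers this bound from the sums of phi_s to those of g_sigma, with no
   exchange of sum and integral. *)

From Stdlib Require Import Reals Lra Lia.
From Coquelicot Require Import Coquelicot.
Open Scope R_scope.

Lemma continuous_of_ex_derive (f : R -> R) x : ex_derive f x -> continuous f x.
Proof. exact (@ex_derive_continuous R_AbsRing R_NormedModule f x). Qed.

Lemma abs_sub_le_of_derive_bound (G dG : R -> R) a b K : a <= b ->
  (forall t, a <= t <= b -> is_derive G t (dG t)) ->
  (forall t, a <= t <= b -> Rabs (dG t) <= K) ->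
  Rabs (G b - G a) <= K * (b - a).
Proof.
intros Hab Hd HK.
assert (Hmin : Rmin a b = a) by (apply Rmin_left; lra).
assert (Hmax : Rmax a b = b) by (apply Rmax_right; lra).
destruct (MVT_gen G a b dG) as [c [Hc ->]]; rewrite Hmin, Hmax in *.
- intros x Hx. apply Hd. lra.
- intros x Hx. apply continuity_pt_filterlim, continuous_of_ex_derive.
  exists (dG x). apply Hd. exact Hx.
- rewrite Rabs_mult, (Rabs_right (b - a)) by lra.
  apply Rmult_le_compat_r; [lra | apply HK; lra].
Qed.

(* Two nested mean value arguments: first for
   [U t = (f t - f a)/2 - (t - a) f1 t / 2], whose derivative is [-(t - a) f2 t / 2],
   then for the error [F t - F a - (t - a)(f a + f t)/2], whose derivative is [U t]. *)
Lemma trapezoid_error (F f f1 f2 : R -> R) a h M : 0 < h ->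
  (forall t, a <= t <= a + h ->
     is_derive F t (f t) /\ is_derive f t (f1 t) /\ is_derive f1 t (f2 t)) ->
  (forall t, a <= t <= a + h -> Rabs (f2 t) <= M) ->
  Rabs (F (a + h) - F a - h * (f a + f (a + h)) / 2) <= M * h ^ 3 / 2.
Proof.
intros Hh Hd HM.
assert (HM0 : 0 <= M) by (specialize (HM a ltac:(lra)); pose proof (Rabs_pos (f2 a)); lra).
set (U := fun t => (f t - f a) / 2 - (t - a) * f1 t / 2).
set (T := fun t => F t - F a - (t - a) * (f a + f t) / 2).
assert (HU : forall t, a <= t <= a + h -> Rabs (U t) <= M * h / 2 * h).
{ intros t Ht.
  replace (U t) with (U t - U a) by (unfold U; lra).
  apply Rle_trans with (M * h / 2 * (t - a)); [| apply Rmult_le_compat_l; nra].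
  apply (abs_sub_le_of_derive_bound U (fun t => - (t - a) * f2 t / 2)); [lra | |].
  - intros y Hy. destruct (Hd y ltac:(lra)) as [_ [H1 H2]].
    unfold U. auto_derive.
    + repeat split; [exists (f1 y) | exists (f2 y)]; assumption.
    + replace (Derive (fun x => f x) y) with (f1 y) by (symmetry; now apply is_derive_unique).
      replace (Derive (fun x => f1 x) y) with (f2 y) by (symmetry; now apply is_derive_unique).
      lra.
  - intros y Hy. specialize (HM y ltac:(lra)).
    replace (- (y - a) * f2 y / 2) with ((y - a) / 2 * - f2 y) by field.
    rewrite Rabs_mult, Rabs_Ropp, Rabs_right by lra.
    pose proof (Rabs_pos (f2 y)). nra. }
replace (F (a + h) - F a - h * (f a + f (a + h)) / 2) with (T (a + h) - T a)
  by (unfold T; field).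
replace (M * h ^ 3 / 2) with (M * h / 2 * h * (a + h - a)) by field.
apply (abs_sub_le_of_derive_bound T U); [lra | | exact HU].
intros y Hy. destruct (Hd y ltac:(lra)) as [H0 [H1 _]].
unfold T. auto_derive.
- repeat split; [exists (f y) | exists (f1 y)]; assumption.
- replace (Derive (fun x => F x) y) with (f y) by (symmetry; now apply is_derive_unique).
  replace (Derive (fun x => f x) y) with (f1 y) by (symmetry; now apply is_derive_unique).
  unfold U. lra.
Qed.

Lemma abs_le_of_inverse_square_increments (T : nat -> R) B c :
  Rabs (T 1%nat) <= B ->
  (forall m, (1 <= m)%nat -> Rabs (T (S m) - T m) <= c / (INR m * INR m)) ->
  forall m, (1 <= m)%nat -> Rabs (T m) <= B + 2 * c.
Proof.
intros H1 Hinc.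
assert (Hc : 0 <= c).
{ specialize (Hinc 1%nat (le_n 1)). simpl in Hinc.
  pose proof (Rabs_pos (T 2%nat - T 1%nat)). lra. }
(* telescoping against [1/m^2 <= 2 (1/m - 1/(m+1))] *)
assert (Hstrong : forall m, (1 <= m)%nat -> Rabs (T m) <= B + 2 * c * (1 - / INR m)).
{ induction m as [|m IH]; intros Hm; [lia|].
  destruct (Nat.eq_dec m 0) as [->|Hm0].
  - simpl. rewrite Rinv_1. lra.
  - assert (Hm1 : 1 <= INR m) by (apply (le_INR 1); lia).
    specialize (IH ltac:(lia)). specialize (Hinc m ltac:(lia)).
    rewrite S_INR.
    assert (Hsq : c / (INR m * INR m) <= 2 * c * (/ INR m - / (INR m + 1))).
    { replace (2 * c * (/ INR m - / (INR m + 1))) with (c / (INR m * (INR m + 1) / 2))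
        by (field; lra).
      unfold Rdiv. apply Rmult_le_compat_l; [lra|]. apply Rinv_le_contravar; nra. }
    replace (T (S m)) with (T m + (T (S m) - T m)) by ring.
    eapply Rle_trans; [apply Rabs_triang | lra]. }
intros m Hm. specialize (Hstrong m Hm).
assert (0 < / INR m) by (apply Rinv_0_lt_compat, lt_0_INR; lia). nra.
Qed.

Lemma is_derive_sum_n_m (F : R -> nat -> R) (dF : nat -> R) x n m :
  (forall k, is_derive (fun s => F s k) x (dF k)) ->
  is_derive (fun s => sum_n_m (F s) n m) x (sum_n_m dF n m).
Proof.
intros Hd. induction m as [|m IH].
- destruct n as [|n].
  + rewrite sum_n_n. apply (is_derive_ext (fun s => F s 0%nat)); [|apply Hd].
    intros t. now rewrite sum_n_n.
  + rewrite sum_n_m_zero by lia.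
    apply (is_derive_ext (fun _ => 0)); [|auto_derive; reflexivity].
    intros t. rewrite sum_n_m_zero by lia. reflexivity.
- destruct (Compare_dec.le_lt_dec n (S m)) as [Hn|Hn].
  + rewrite sum_n_Sm by lia.
    apply (is_derive_ext (fun s => plus (sum_n_m (F s) n m) (F s (S m)))).
    { intros t. rewrite sum_n_Sm by lia. reflexivity. }
    apply (is_derive_plus _ _ x _ _ IH (Hd (S m))).
  + rewrite sum_n_m_zero by lia.
    apply (is_derive_ext (fun _ => 0)); [|auto_derive; reflexivity].
    intros t. rewrite sum_n_m_zero by lia. reflexivity.
Qed.

Lemma is_derive_atan_div c s : 0 < c -> is_derive (fun s => atan (s / c)) s (c / (c ^ 2 + s ^ 2)).
Proof.
intros Hc.
replace (c / (c ^ 2 + s ^ 2)) with (scal (/ c) (/ (1 + (s / c) ^ 2))).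
- apply (is_derive_comp atan (fun s => s / c)).
  + apply is_derive_Reals, derivable_pt_lim_atan.
  + auto_derive; [exact I | ring].
- unfold scal; simpl; unfold mult; simpl. field.
  split; [nra | lra].
Qed.

Lemma Rpower_Ropp_antitone e x y : 0 <= e -> 0 < x <= y -> Rpower y (- e) <= Rpower x (- e).
Proof.
intros He Hxy. rewrite !Rpower_Ropp.
apply Rinv_le_contravar; [apply exp_pos | apply Rle_Rpower_l; lra].
Qed.

Lemma Rpower_1_plus x e : 0 < x -> Rpower x (1 + e) = x * Rpower x e.
Proof. intros Hx. rewrite Rpower_plus, Rpower_1 by exact Hx. reflexivity. Qed.

Lemma exp_le_compat x y : x <= y -> exp x <= exp y.
Proof. intros [Hlt | ->]; [left; apply exp_increasing, Hlt | right; reflexivity]. Qed.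

Lemma Rpower_ge_self x e : 0 < x <= 1 -> e <= 1 -> x <= Rpower x e.
Proof.
intros Hx He.
assert (ln x <= 0) by (rewrite <- ln_1; apply ln_le; lra).
unfold Rpower. rewrite <- (exp_ln x) at 1 by lra.
apply exp_le_compat. nra.
Qed.

Lemma Rpower_vanishes_at_right_0 e : 0 < e ->
  filterlim (fun x => Rpower x e) (at_right 0) (locally 0).
Proof.
intros He. unfold Rpower.
apply (filterlim_comp _ _ _ (fun x => e * ln x) exp _ (Rbar_locally m_infty));
  [| exact is_lim_exp_m].
eapply filterlim_comp; [exact is_lim_ln_0|].
replace m_infty with (Rbar_mult e m_infty) at 2; [apply filterlim_Rbar_mult_l|].
simpl. destruct (Rle_dec 0 e) as [He'|]; [|lra].
destruct (Rle_lt_or_eq_dec 0 e He'); [reflexivity | lra].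
Qed.

Lemma filterlim_at_right_0_of_Rpower_bound (F : R -> R) K e : 0 < e ->
  (forall x, 0 < x -> Rabs (F x) <= K * Rpower x e) ->
  filterlim F (at_right 0) (locally 0).
Proof.
intros He HF.
assert (Hlim : forall c, filterlim (fun x => c * Rpower x e) (at_right 0) (locally 0)).
{ intros c. apply (filterlim_comp _ _ _ (fun x => Rpower x e) (Rmult c) _ (locally 0)).
  - apply Rpower_vanishes_at_right_0, He.
  - rewrite <- (Rmult_0_r c) at 2. apply (filterlim_Rbar_mult_l c 0). }
apply (filterlim_le_le (F := at_right 0) (fun x => - K * Rpower x e) F
                       (fun x => K * Rpower x e) 0); [| apply Hlim | apply Hlim].
exists (mkposreal 1 Rlt_0_1). intros x _ Hx.
rewrite Ropp_mult_distr_l_reverse. apply Rabs_le_between, HF, Hx.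
Qed.

Lemma continuity_2d_pt_comp_ex_derive (F : R -> R) (f : R -> R -> R) x t :
  ex_derive F (f x t) -> continuity_2d_pt f x t ->
  continuity_2d_pt (fun u v => F (f u v)) x t.
Proof.
intros HF Hf. apply continuity_1d_2d_pt_comp; [|exact Hf].
apply continuity_pt_filterlim, continuous_of_ex_derive, HF.
Qed.

Lemma continuity_2d_pt_ln x t : 0 < x -> continuity_2d_pt (fun u _ => ln u) x t.
Proof.
intros Hx. apply (continuity_2d_pt_comp_ex_derive ln (fun u _ => u));
  [auto_derive; lra | apply continuity_2d_pt_id1].
Qed.

Lemma continuity_2d_pt_Rpower e x t : 0 < x -> continuity_2d_pt (fun u _ => Rpower u e) x t.
Proof.
intros Hx. apply (continuity_2d_pt_comp_ex_derive (fun z => exp (e * z)) (fun u _ => ln u));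
  [auto_derive; exact I | apply continuity_2d_pt_ln, Hx].
Qed.

Lemma continuity_2d_pt_mult_ln x t : 0 < x -> continuity_2d_pt (fun u v => v * ln u) x t.
Proof.
intros Hx. apply (continuity_2d_pt_mult (fun _ v => v) (fun u _ => ln u));
  [apply continuity_2d_pt_id2 | apply continuity_2d_pt_ln, Hx].
Qed.

Lemma is_derive_RInt_param_01 (f df : R -> R -> R) x :
  locally x (fun y => forall s, is_derive (f s) y (df s y)) ->
  (forall s, 0 <= s <= 1 -> continuity_2d_pt (fun u v => df v u) x s) ->
  (forall y s, ex_derive (fun s => f s y) s) ->
  is_derive (fun y => RInt (fun s => f s y) 0 1) x (RInt (fun s => df s x) 0 1).
Proof.
intros Hd Hc Hs.
assert (Hdf : forall y s, (forall s, is_derive (f s) y (df s y)) ->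
                          Derive (fun z => f s z) y = df s y).
{ intros y s Hy. apply is_derive_unique, Hy. }
rewrite (RInt_ext (fun s => df s x) (fun s => Derive (fun u => f s u) x)).
2:{ intros s _. symmetry. apply Hdf. apply (locally_singleton _ _ Hd). }
apply (is_derive_RInt_param (fun u s => f s u)).
- apply (filter_imp _ _ (fun y Hy s _ => ex_intro _ _ (Hy s)) Hd).
- intros s Hs01. rewrite Rmin_left, Rmax_right in Hs01 by lra.
  apply (continuity_2d_pt_ext_loc (fun u v => df v u)); [|exact (Hc s Hs01)].
  destruct Hd as [eps Heps]. exists eps. intros u v Hu _.
  symmetry. apply Hdf, Heps, Hu.
- apply filter_forall. intros y. apply (@ex_RInt_continuous R_CompleteNormedModule).
  intros s _. apply continuous_of_ex_derive, Hs.
Qed.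

Section Kernel.

Variable sigma : R.
Hypothesis Hsigma : 0 <= sigma < 1.

Definition phi (s x : R) : R := Rpower x (- sigma) * cos (s * ln x).

Definition dphi (s x : R) : R :=
  Rpower x (- sigma) / x * (- sigma * cos (s * ln x) - s * sin (s * ln x)).

Definition d2phi (s x : R) : R :=
  Rpower x (- sigma) / (x * x) *
  ((sigma * (sigma + 1) - s ^ 2) * cos (s * ln x) + s * (2 * sigma + 1) * sin (s * ln x)).

Definition Phi (s x : R) : R :=
  Rpower x (1 - sigma) * ((1 - sigma) * cos (s * ln x) + s * sin (s * ln x))
  / ((1 - sigma) ^ 2 + s ^ 2).

Lemma Phi_denom_pos s : 0 < (1 - sigma) ^ 2 + s ^ 2.
Proof. assert (0 < (1 - sigma) ^ 2) by (apply pow_lt; lra). nra. Qed.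

Lemma is_derive_Phi s x : 0 < x -> is_derive (Phi s) x (phi s x).
Proof.
intros Hx. pose proof (Phi_denom_pos s).
unfold Phi, phi, Rpower. auto_derive; [tauto|].
replace ((1 - sigma) * ln x) with (ln x + - sigma * ln x) by ring.
rewrite exp_plus, exp_ln by exact Hx. field. lra.
Qed.

Lemma is_derive_phi s x : 0 < x -> is_derive (phi s) x (dphi s x).
Proof. intros Hx. unfold phi, dphi, Rpower. auto_derive; [tauto | field; lra]. Qed.

Lemma is_derive_dphi s x : 0 < x -> is_derive (dphi s) x (d2phi s x).
Proof.
intros Hx. unfold dphi, d2phi, Rpower.
auto_derive; [repeat split; lra | field; lra].
Qed.

Lemma phi_at_1 s : phi s 1 = 1.
Proof. unfold phi, Rpower. rewrite ln_1, !Rmult_0_r, exp_0, cos_0. ring. Qed.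

Lemma Phi_at_1 s : Phi s 1 = (1 - sigma) / ((1 - sigma) ^ 2 + s ^ 2).
Proof.
pose proof (Phi_denom_pos s).
unfold Phi, Rpower. rewrite ln_1, !Rmult_0_r, exp_0, cos_0, sin_0. field. lra.
Qed.

Lemma Rabs_phi_le s x : Rabs (phi s x) <= Rpower x (- sigma).
Proof.
unfold phi. rewrite Rabs_mult, (Rabs_right (Rpower _ _)) by (left; apply exp_pos).
rewrite <- Rmult_1_r. apply Rmult_le_compat_l; [left; apply exp_pos|].
apply Rabs_le, COS_bound.
Qed.

Lemma Rabs_Phi_le s x : 0 <= s <= 1 ->
  Rabs (Phi s x) <= 2 * Rpower x (1 - sigma) / (1 - sigma) ^ 2.
Proof.
intros Hs. pose proof (Phi_denom_pos s).
assert (P : 0 < (1 - sigma) ^ 2) by (apply pow_lt; lra).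
assert (E : 0 < Rpower x (1 - sigma)) by apply exp_pos.
pose proof (COS_bound (s * ln x)). pose proof (SIN_bound (s * ln x)).
assert (N : Rabs ((1 - sigma) * cos (s * ln x) + s * sin (s * ln x)) <= 2)
  by (apply Rabs_le; split; nra).
unfold Phi, Rdiv.
rewrite !Rabs_mult, Rabs_inv, (Rabs_right (Rpower _ _)), (Rabs_right (_ + s ^ 2)) by lra.
apply Rle_trans with (Rpower x (1 - sigma) * 2 * / ((1 - sigma) ^ 2 + s ^ 2)).
- apply Rmult_le_compat_r; [left; apply Rinv_0_lt_compat; lra | nra].
- replace (2 * Rpower x (1 - sigma) * / (1 - sigma) ^ 2)
    with (Rpower x (1 - sigma) * 2 * / (1 - sigma) ^ 2) by ring.
  apply Rmult_le_compat_l; [lra|]. apply Rinv_le_contravar; [lra | nra].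
Qed.

Lemma Rabs_d2phi_le s a t : 0 <= s <= 1 -> 0 < a <= t ->
  Rabs (d2phi s t) <= 6 * Rpower a (- sigma) / (a * a).
Proof.
intros Hs Ha. unfold d2phi.
assert (Rabs (cos (s * ln t)) <= 1) by apply Rabs_le, COS_bound.
assert (Rabs (sin (s * ln t)) <= 1) by apply Rabs_le, SIN_bound.
assert (N : Rabs ((sigma * (sigma + 1) - s ^ 2) * cos (s * ln t)
                  + s * (2 * sigma + 1) * sin (s * ln t)) <= 6).
{ eapply Rle_trans; [apply Rabs_triang|]. rewrite !Rabs_mult.
  assert (Rabs (sigma * (sigma + 1) - s ^ 2) <= 3) by (apply Rabs_le; split; nra).
  rewrite (Rabs_right s), (Rabs_right (2 * sigma + 1)) by lra.
  assert (Rabs (sigma * (sigma + 1) - s ^ 2) * Rabs (cos (s * ln t)) <= 3 * 1)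
    by (apply Rmult_le_compat; try apply Rabs_pos; lra).
  assert (s * (2 * sigma + 1) * Rabs (sin (s * ln t)) <= 3 * 1)
    by (apply Rmult_le_compat; try apply Rabs_pos; nra).
  lra. }
pose proof (Rpower_Ropp_antitone sigma a t ltac:(lra) Ha).
assert (0 < Rpower t (- sigma)) by apply exp_pos.
assert (/ (t * t) <= / (a * a)) by (apply Rinv_le_contravar; nra).
assert (0 < / (t * t)) by (apply Rinv_0_lt_compat; nra).
unfold Rdiv. rewrite !Rabs_mult, Rabs_inv, (Rabs_right (Rpower _ _)), (Rabs_right (t * t)) by nra.
pose proof (Rabs_pos ((sigma * (sigma + 1) - s ^ 2) * cos (s * ln t)
                      + s * (2 * sigma + 1) * sin (s * ln t))).
replace (6 * Rpower a (- sigma) * / (a * a)) with (Rpower a (- sigma) * / (a * a) * 6) by ring.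
apply Rmult_le_compat; [nra | lra | apply Rmult_le_compat; lra | exact N].
Qed.

Lemma phi_trapezoid_step s h m : 0 <= s <= 1 -> 0 < h -> 1 <= m ->
  Rabs (Phi s (m * h + h) - Phi s (m * h) - h * (phi s (m * h) + phi s (m * h + h)) / 2)
  <= 3 * Rpower h (1 - sigma) / (m * m).
Proof.
intros Hs Hh Hm.
eapply Rle_trans.
{ apply (trapezoid_error (Phi s) (phi s) (dphi s) (d2phi s) (m * h) h
          (6 * Rpower (m * h) (- sigma) / ((m * h) * (m * h)))); [exact Hh | |].
  - intros t Ht.
    split; [|split]; [apply is_derive_Phi | apply is_derive_phi | apply is_derive_dphi]; nra.
  - intros t Ht. apply Rabs_d2phi_le; nra. }
pose proof (Rpower_Ropp_antitone sigma h (m * h) ltac:(lra) ltac:(nra)).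
replace (6 * Rpower (m * h) (- sigma) / (m * h * (m * h)) * h ^ 3 / 2)
  with (3 * (h * Rpower (m * h) (- sigma)) / (m * m)) by (field; lra).
replace (1 - sigma) with (1 + - sigma) by ring. rewrite Rpower_1_plus by exact Hh.
unfold Rdiv. apply Rmult_le_compat_r; [left; apply Rinv_0_lt_compat; nra|].
apply Rmult_le_compat_l; [lra|]. apply Rmult_le_compat_l; lra.
Qed.

Lemma phi_composite_trapezoid s h m : 0 <= s <= 1 -> 0 < h -> (1 <= m)%nat ->
  Rabs (h * sum_n_m (fun k => phi s (INR k * h)) 1 m - Phi s (INR m * h)
        - h / 2 * phi s (INR m * h))
  <= (1 / 2 + 2 / (1 - sigma) ^ 2 + 6) * Rpower h (1 - sigma).
Proof.
intros Hs Hh Hm.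
set (H := Rpower h (1 - sigma)).
assert (HH : 0 < H) by apply exp_pos.
assert (Hh1 : Rabs (h * phi s h) <= H).
{ unfold H. replace (1 - sigma) with (1 + - sigma) by ring. rewrite Rpower_1_plus by exact Hh.
  rewrite Rabs_mult, (Rabs_right h) by lra.
  apply Rmult_le_compat_l; [lra | apply Rabs_phi_le]. }
replace ((1 / 2 + 2 / (1 - sigma) ^ 2 + 6) * H)
  with ((1 / 2 + 2 / (1 - sigma) ^ 2) * H + 2 * (3 * H)) by ring.
apply (abs_le_of_inverse_square_increments
         (fun n => h * sum_n_m (fun k => phi s (INR k * h)) 1 n - Phi s (INR n * h)
                   - h / 2 * phi s (INR n * h))); [| | exact Hm].
- rewrite sum_n_n. replace (INR 1 * h) with h by (simpl; ring).
  replace (h * phi s h - Phi s h - h / 2 * phi s h)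
    with (/ 2 * (h * phi s h) + - Phi s h) by field.
  eapply Rle_trans; [apply Rabs_triang|].
  rewrite Rabs_Ropp, Rabs_mult, (Rabs_right (/ 2)) by lra.
  pose proof (Rabs_Phi_le s h Hs) as HPhi. fold H in HPhi.
  replace (2 * H / (1 - sigma) ^ 2) with (2 / (1 - sigma) ^ 2 * H) in HPhi by (field; lra).
  lra.
- clear m Hm. intros m Hm. assert (Hm1 : 1 <= INR m) by (apply (le_INR 1); exact Hm).
  rewrite sum_n_Sm by lia. rewrite S_INR.
  replace ((INR m + 1) * h) with (INR m * h + h) by ring.
  pose proof (phi_trapezoid_step s h (INR m) Hs Hh Hm1) as Hstep. fold H in Hstep.
  match goal with |- Rabs ?e <= _ => replace e with
    (- (Phi s (INR m * h + h) - Phi s (INR m * h)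
        - h * (phi s (INR m * h) + phi s (INR m * h + h)) / 2)) end.
  + rewrite Rabs_Ropp. exact Hstep.
  + change plus with Rplus. field.
Qed.

(* On (0, 1), [Psi s x = \int_0^s phi t x dt]; it vanishes at [x = 1] like [g]. *)
Definition Psi (s x : R) : R :=
  if Rlt_dec 0 x then
    if Rlt_dec x 1 then Rpower x (- sigma) * sin (s * ln x) / ln x else 0
  else 0.

Definition dPsi (s x : R) : R :=
  if Rlt_dec 0 x then if Rlt_dec x 1 then phi s x else 0 else 0.

Lemma is_derive_Psi x s : is_derive (fun s => Psi s x) s (dPsi s x).
Proof.
unfold Psi, dPsi. destruct (Rlt_dec 0 x) as [Hx0|]; [destruct (Rlt_dec x 1) as [Hx1|]|].
- assert (ln x < 0) by (rewrite <- ln_1; apply ln_increasing; lra).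
  unfold phi. auto_derive; [exact I | field; lra].
- auto_derive; [exact I | reflexivity].
- auto_derive; [exact I | reflexivity].
Qed.

Lemma Psi_0 x : Psi 0 x = 0.
Proof.
unfold Psi. destruct (Rlt_dec 0 x); [destruct (Rlt_dec x 1)|]; try reflexivity.
rewrite Rmult_0_l, sin_0. unfold Rdiv. ring.
Qed.

Lemma Psi_1 x : 0 < x <= 1 -> Psi 1 x = g_sigma sigma x.
Proof.
intros Hx. unfold Psi, g_sigma, g.
destruct (Rlt_dec 0 x); [|lra]. destruct (Rle_dec x 1); [|lra].
destruct (Rlt_dec x 1); [|unfold Rdiv; ring].
rewrite Rmult_1_l, Rpower_Ropp. unfold Rdiv. ring.
Qed.

Lemma sum_dPsi_eq s l : (1 <= l)%nat ->
  sum_n_m (fun k => dPsi s (INR k / INR l)) 1 l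
  = sum_n_m (fun k => phi s (INR k / INR l)) 1 l - 1.
Proof.
intros Hl. assert (Hl0 : 0 < INR l) by (apply lt_0_INR; lia).
destruct l as [|l]; [lia|].
rewrite !sum_n_Sm by lia. change plus with Rplus.
replace (INR (S l) / INR (S l)) with 1 by (field; lra).
rewrite phi_at_1. unfold dPsi at 2.
destruct (Rlt_dec 0 1); [|lra]. destruct (Rlt_dec 1 1); [lra|].
rewrite (sum_n_m_ext_loc (fun k => dPsi s (INR k / INR (S l)))
                         (fun k => phi s (INR k / INR (S l)))); [lra|].
intros k Hk. unfold dPsi.
assert (1 <= INR k) by (apply (le_INR 1); lia).
assert (INR k < INR (S l)) by (apply lt_INR; lia).
destruct (Rlt_dec 0 (INR k / INR (S l))) as [_|Hq].
2:{ exfalso. apply Hq. apply Rdiv_lt_0_compat; lra. }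
destruct (Rlt_dec (INR k / INR (S l)) 1) as [_|Hq]; [reflexivity|].
exfalso. apply Hq, (Rdiv_lt_1 (INR k)); lra.
Qed.

Lemma Rabs_dPsi_sum_sub_Phi_le s l : 0 <= s <= 1 -> (1 <= l)%nat ->
  Rabs (/ INR l * sum_n_m (fun k => dPsi s (INR k / INR l)) 1 l - Phi s 1)
  <= (1 / 2 + 2 / (1 - sigma) ^ 2 + 6) * Rpower (/ INR l) (1 - sigma) + 3 / 2 * / INR l.
Proof.
intros Hs Hl.
assert (Hl0 : 0 < INR l) by (apply lt_0_INR; lia).
assert (Hh : 0 < / INR l) by (apply Rinv_0_lt_compat; lra).
pose proof (phi_composite_trapezoid s (/ INR l) l Hs Hh Hl) as Htrap.
replace (INR l * / INR l) with 1 in Htrap by (field; lra).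
rewrite phi_at_1 in Htrap.
rewrite sum_dPsi_eq by exact Hl.
set (S := sum_n_m (fun k => phi s (INR k / INR l)) 1 l) in *.
change (sum_n_m (fun k => phi s (INR k * / INR l)) 1 l) with S in Htrap.
replace (/ INR l * (S - 1) - Phi s 1)
  with ((/ INR l * S - Phi s 1 - / INR l / 2 * 1) + - (/ INR l / 2)) by lra.
eapply Rle_trans; [apply Rabs_triang|].
rewrite Rabs_Ropp, (Rabs_right (/ INR l / 2)) by lra. lra.
Qed.

Lemma riemann_sum_eq_Psi_sum l : (1 <= l)%nat ->
  riemann_sum sigma l = / INR l * sum_n_m (fun k => Psi 1 (INR k / INR l)) 1 l.
Proof.
intros Hl. assert (Hl0 : 0 < INR l) by (apply lt_0_INR; lia).
unfold riemann_sum. f_equal. apply sum_n_m_ext_loc.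
intros k Hk. symmetry. apply Psi_1.
assert (1 <= INR k) by (apply (le_INR 1); lia).
assert (INR k <= INR l) by (apply le_INR; lia).
split; [apply Rdiv_lt_0_compat | apply (Rdiv_le_1 (INR k))]; lra.
Qed.

Lemma riemann_sum_sub_atan_le l : (1 <= l)%nat ->
  Rabs (riemann_sum sigma l - atan (1 / (1 - sigma)))
  <= (1 / 2 + 2 / (1 - sigma) ^ 2 + 8) / Rpower (INR l) (1 - sigma).
Proof.
intros Hl.
assert (Hl0 : 0 < INR l) by (apply lt_0_INR; lia).
set (h := / INR l).
assert (Hh : 0 < h <= 1)
  by (split; [apply Rinv_0_lt_compat | rewrite <- Rinv_1; apply Rinv_le_contravar];
      apply (le_INR 1) in Hl; simpl in Hl; lra).
set (H := Rpower h (1 - sigma)).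
assert (HhH : h <= H) by (apply Rpower_ge_self; lra).
assert (HH : / Rpower (INR l) (1 - sigma) = H)
  by (unfold H, h, Rpower; rewrite ln_Rinv, <- exp_Ropp by lra; f_equal; ring).
set (E := fun s => h * sum_n_m (fun k => Psi s (INR k / INR l)) 1 l - atan (s / (1 - sigma))).
replace (riemann_sum sigma l - atan (1 / (1 - sigma))) with (E 1 - E 0).
2:{ unfold E. rewrite riemann_sum_eq_Psi_sum by exact Hl.
    rewrite (sum_n_m_ext_loc (fun k => Psi 0 (INR k / INR l)) (fun _ => zero))
      by (intros k _; apply Psi_0).
    rewrite sum_n_m_const_zero, Rdiv_0_l, atan_0.
    change (@zero R_AbelianMonoid) with 0. unfold h. ring. }
replace ((1 / 2 + 2 / (1 - sigma) ^ 2 + 8) / Rpower (INR l) (1 - sigma))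
  with ((1 / 2 + 2 / (1 - sigma) ^ 2 + 8) * H * (1 - 0)) by (rewrite <- HH; unfold Rdiv; ring).
apply (abs_sub_le_of_derive_bound E
         (fun s => h * sum_n_m (fun k => dPsi s (INR k / INR l)) 1 l - Phi s 1)); [lra | |].
- intros t Ht. rewrite Phi_at_1. unfold E.
  apply (is_derive_minus (fun s => h * sum_n_m (fun k => Psi s (INR k / INR l)) 1 l)).
  + apply (is_derive_scal (fun s => sum_n_m (fun k => Psi s (INR k / INR l)) 1 l)).
    apply (is_derive_sum_n_m (fun s k => Psi s (INR k / INR l))).
    intros k. apply is_derive_Psi.
  + apply is_derive_atan_div. lra.
- intros t Ht.
  eapply Rle_trans; [apply (Rabs_dPsi_sum_sub_Phi_le t l Ht Hl)|]. fold h H.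
  lra.
Qed.

Lemma continuity_2d_pt_phi x t : 0 < x -> continuity_2d_pt (fun u v => phi v u) x t.
Proof.
intros Hx. unfold phi.
apply (continuity_2d_pt_mult (fun u _ => Rpower u (- sigma)) (fun u v => cos (v * ln u))).
- apply continuity_2d_pt_Rpower, Hx.
- apply (continuity_2d_pt_comp_ex_derive cos (fun u v => v * ln u));
    [auto_derive; exact I | apply continuity_2d_pt_mult_ln, Hx].
Qed.

Lemma continuity_2d_pt_dphi x t : 0 < x -> continuity_2d_pt (fun u v => dphi v u) x t.
Proof.
intros Hx. unfold dphi, Rdiv.
apply (continuity_2d_pt_mult (fun u _ => Rpower u (- sigma) * / u)
         (fun u v => - sigma * cos (v * ln u) - v * sin (v * ln u))).
- apply (continuity_2d_pt_mult (fun u _ => Rpower u (- sigma)) (fun u _ => / u)).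
  + apply continuity_2d_pt_Rpower, Hx.
  + apply (continuity_2d_pt_inv (fun u _ => u)); [apply continuity_2d_pt_id1 | lra].
- apply (continuity_2d_pt_minus (fun u v => - sigma * cos (v * ln u))
                                (fun u v => v * sin (v * ln u))).
  + apply (continuity_2d_pt_comp_ex_derive (fun z => - sigma * cos z) (fun u v => v * ln u));
      [auto_derive; exact I | apply continuity_2d_pt_mult_ln, Hx].
  + apply (continuity_2d_pt_mult (fun _ v => v) (fun u v => sin (v * ln u)));
      [apply continuity_2d_pt_id2|].
    apply (continuity_2d_pt_comp_ex_derive sin (fun u v => v * ln u));
      [auto_derive; exact I | apply continuity_2d_pt_mult_ln, Hx].
Qed.

Lemma ex_derive_Phi_param x s : ex_derive (fun s => Phi s x) s.
Proof. pose proof (Phi_denom_pos s). unfold Phi. auto_derive. lra. Qed.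

Lemma ex_derive_phi_param x s : ex_derive (fun s => phi s x) s.
Proof. unfold phi. auto_derive. exact I. Qed.

Definition int_phi (x : R) : R := RInt (fun s => phi s x) 0 1.
Definition int_Phi (x : R) : R := RInt (fun s => Phi s x) 0 1.

Lemma is_derive_int_Phi x : 0 < x -> is_derive int_Phi x (int_phi x).
Proof.
intros Hx. apply is_derive_RInt_param_01.
- apply (filter_imp (fun y => 0 < y)); [|apply open_gt, Hx].
  intros y Hy s. apply is_derive_Phi, Hy.
- intros s _. apply continuity_2d_pt_phi, Hx.
- apply ex_derive_Phi_param.
Qed.

Lemma continuous_int_phi x : 0 < x -> continuous int_phi x.
Proof.
intros Hx. apply continuous_of_ex_derive. exists (RInt (fun s => dphi s x) 0 1).
apply is_derive_RInt_param_01.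
- apply (filter_imp (fun y => 0 < y)); [|apply open_gt, Hx].
  intros y Hy s. apply is_derive_phi, Hy.
- intros s _. apply continuity_2d_pt_dphi, Hx.
- apply ex_derive_phi_param.
Qed.

Lemma int_phi_eq_g_sigma x : 0 < x < 1 -> int_phi x = g_sigma sigma x.
Proof.
intros Hx. unfold int_phi. apply is_RInt_unique.
replace (g_sigma sigma x) with (minus (Psi 1 x) (Psi 0 x))
  by (rewrite Psi_1, Psi_0 by lra; unfold minus, plus, opp; simpl; ring).
apply (is_RInt_derive (fun s => Psi s x)).
- intros s _. replace (phi s x) with (dPsi s x); [apply is_derive_Psi|].
  unfold dPsi. destruct (Rlt_dec 0 x); [|lra]. destruct (Rlt_dec x 1); [reflexivity | lra].
- intros s _. apply continuous_of_ex_derive, ex_derive_phi_param.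
Qed.

Lemma int_Phi_at_1 : int_Phi 1 = atan (1 / (1 - sigma)).
Proof.
unfold int_Phi. rewrite (RInt_ext _ (fun s => (1 - sigma) / ((1 - sigma) ^ 2 + s ^ 2)))
  by (intros s _; apply Phi_at_1).
apply is_RInt_unique.
replace (atan (1 / (1 - sigma))) with (minus (atan (1 / (1 - sigma))) (atan (0 / (1 - sigma))))
  by (rewrite Rdiv_0_l, atan_0; unfold minus, plus, opp; simpl; ring).
apply (is_RInt_derive (fun s => atan (s / (1 - sigma)))).
- intros s _. apply is_derive_atan_div. lra.
- intros s _. apply continuous_of_ex_derive.
  pose proof (Phi_denom_pos s). auto_derive. lra.
Qed.

Lemma Rabs_int_Phi_le x : Rabs (int_Phi x) <= 2 / (1 - sigma) ^ 2 * Rpower x (1 - sigma).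
Proof.
unfold int_Phi.
replace (2 / (1 - sigma) ^ 2 * Rpower x (1 - sigma))
  with ((1 - 0) * (2 * Rpower x (1 - sigma) / (1 - sigma) ^ 2)) by (unfold Rdiv; ring).
apply abs_RInt_le_const; [lra | |].
- apply (@ex_RInt_continuous R_CompleteNormedModule).
  intros s _. apply continuous_of_ex_derive, ex_derive_Phi_param.
- intros s Hs. apply Rabs_Phi_le, Hs.
Qed.

Lemma is_RInt_gen_g_sigma :
  is_RInt_gen (g_sigma sigma) (at_right 0) (at_point 1) (atan (1 / (1 - sigma))).
Proof.
assert (Hnear : filter_prod (at_right 0) (at_point 1) (fun ab => 0 < fst ab < 1 /\ snd ab = 1)).
{ apply (Filter_prod _ _ _ (fun a => 0 < a < 1) (fun b => b = 1)); [| reflexivity |].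
  - exists (mkposreal 1 Rlt_0_1). intros y Hy Hy0.
    assert (Hy1 : Rabs (y - 0) < 1) by exact Hy. apply Rabs_lt_between in Hy1. lra.
  - intros a b Ha Hb. simpl. tauto. }
assert (HD : forall x, 0 < x -> Derive int_Phi x = int_phi x)
  by (intros x Hx; apply is_derive_unique, is_derive_int_Phi, Hx).
rewrite <- int_Phi_at_1, <- (Rminus_0_r (int_Phi 1)).
apply (is_RInt_gen_ext (Derive int_Phi)).
{ eapply filter_imp; [|exact Hnear]. intros [a b] [Ha Hb] x Hx. simpl in *. subst b.
  rewrite Rmin_left, Rmax_right in Hx by lra.
  rewrite HD, int_phi_eq_g_sigma by lra. reflexivity. }
apply is_RInt_gen_Derive.
- eapply filter_imp; [|exact Hnear]. intros [a b] [Ha Hb] x Hx. simpl in *. subst b.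
  rewrite Rmin_left, Rmax_right in Hx by lra.
  exists (int_phi x). apply is_derive_int_Phi. lra.
- eapply filter_imp; [|exact Hnear]. intros [a b] [Ha Hb] x Hx. simpl in *. subst b.
  rewrite Rmin_left, Rmax_right in Hx by lra.
  apply (continuous_ext_loc _ int_phi); [|apply continuous_int_phi; lra].
  apply (filter_imp (fun y => 0 < y)); [|apply open_gt; lra].
  intros y Hy. symmetry. apply HD, Hy.
- apply (filterlim_at_right_0_of_Rpower_bound _ (2 / (1 - sigma) ^ 2) (1 - sigma)); [lra|].
  intros x _. apply Rabs_int_Phi_le.
- intros P HP. exact (locally_singleton _ _ HP).
Qed.

End Kernel.

Theorem lemma5p9 (sigma : R) (Hs0 : 0 <= sigma) (Hs1 : sigma < 1) :
  (exists C : R, forall l : nat, (1 <= l)%nat ->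
     Rabs (riemann_sum sigma l - int_g_sigma sigma) <= C / Rpower (INR l) (1 - sigma))
  /\ is_RInt_gen (g_sigma sigma) (at_right 0) (at_point 1) (atan (1 / (1 - sigma)))
  /\ int_g_sigma sigma = atan (1 / (1 - sigma)).
Proof.
assert (Hs : 0 <= sigma < 1) by lra.
assert (Hint : int_g_sigma sigma = atan (1 / (1 - sigma)))
  by apply is_RInt_gen_unique, is_RInt_gen_g_sigma, Hs.
split; [|split; [apply is_RInt_gen_g_sigma, Hs | exact Hint]].
rewrite Hint. exists (1 / 2 + 2 / (1 - sigma) ^ 2 + 8).
apply riemann_sum_sub_atan_le, Hs.
Qed.
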